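(* Fix integers $m\ge d\ge1$, $\lambda=d/m$, let $p$ be a monic polynomial of degree $d$ with nonnegative real roots, and let $\sigma^2>0$. The following are equivalent: (1) $T^{(m,d)}_{\mathbb{S}p}$ is constant equal to $\sigma^2$, i.e. $t_1=\dots=t_d=\sigma^2$; (2) $\mathcal R^{d,\lambda}_{\mathbb{S}p}(s)=m\sigma^2s$; (3) $p$ has the same roots as $L_d^{(m-d)}(x/\sigma^2)$.
   Context: Write $p=\sum_{i=0}^d(-1)^ip_ix^{d-i}$. The rectangular $T$-transform $T^{(m,d)}_{\mathbb{S}p}$ is the multiset of complex numbers $t_1,\dots,t_d$ (viewed as a uniformly distributed random variable) determined by $\frac1d\sum_jt_j^i=\frac{i!(m-i)!(d-i)!}{m!d!}p_i$ for $i=1,\dots,d$; equivalently $\frac1d\sum_je^{-t_j\partial_x\partial_y}\{y^mx^d\}=y^{m-d}p(xy)$. Finite $R$-transform: with $E_p(s)=\sum_{i=0}^d(-1)^i(md)^i\frac{(m-i)!(d-i)!}{m!d!}p_is^i$, $\mathcal R^{d,\lambda}_{\mathbb{S}p}(s)$ is the polynomial of degree $\le d$ agreeing with $-\frac sd\frac d{ds}\log E_p(s)$ mod $s^{d+1}$. $L_d^{(\alpha)}(x)=\sum_{i=0}^d\binom{d+\alpha}{d-i}\frac{(-x)^i}{i!}$. *)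

(* Coefficients in an arbitrary numeric closed field C
   (e.g. algC or complex R), playing the role of the complex numbers. *)
From HB Require Import structures.
From mathcomp Require Import all_boot all_order all_algebra.
Set Implicit Arguments. Unset Strict Implicit. Unset Printing Implicit Defensive.
Import Order.TTheory GRing.Theory Num.Theory.
Local Open Scope ring_scope.

Section Defs.
Variable C : numClosedFieldType.

(* p = \sum_{i=0}^d (-1)^i p_i x^{d-i}, so p_i = (-1)^i * (coefficient of x^{d-i}) *)
Definition pcoef (d : nat) (p : {poly C}) (i : nat) : C :=
  (-1) ^+ i * p`_(d - i).

(* t (a multiset of size d, given as a sequence) is the rectangular
   T-transform T^{(m,d)}_{S p}: it satisfies the defining power-sum equations
   (1/d) sum_j t_j^i = i!(m-i)!(d-i)!/(m!d!) p_i for i = 1..d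
   (these determine the multiset uniquely). *)
Definition is_T_transform (m d : nat) (p : {poly C}) (t : seq C) : Prop :=
  size t = d /\
  forall i : nat, (1 <= i <= d)%N ->
    d%:R^-1 * \sum_(x <- t) x ^+ i
    = (i`! * (m - i)`! * (d - i)`!)%:R / (m`! * d`!)%:R * pcoef d p i.

Definition Epoly (m d : nat) (p : {poly C}) : {poly C} :=
  \sum_(i < d.+1)
    ((-1) ^+ i * ((m * d) ^ i)%:R * ((m - i)`! * (d - i)`!)%:R
      / (m`! * d`!)%:R * pcoef d p i) *: 'X^i.

(* Rp is the finite R-transform R^{d,lambda}_{S p}: a polynomial of degree
   <= d agreeing with -(s/d) E_p'(s)/E_p(s) modulo s^{d+1}; since E_p(0)=1,
   this is equivalent to  Rp * E_p + (1/d) s E_p'  = 0  mod s^{d+1}. *)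
Definition is_finite_R (m d : nat) (p : {poly C}) (Rp : {poly C}) : Prop :=
  (size Rp <= d.+1)%N /\
  forall k : nat, (k <= d)%N ->
    (Rp * Epoly m d p + d%:R^-1 *: ('X * (Epoly m d p)^`()))`_k = 0.

Definition laguerre (d alpha : nat) : {poly C} :=
  \sum_(i < d.+1) ('C(d + alpha, d - i)%:R * (-1) ^+ i / (i`!)%:R) *: 'X^i.

End Defs.

(* Conditions (1) and (2) both say that the normalised coefficients
   k! (m-k)! (d-k)! / (m! d!) p_k equal sigma^(2k) for k <= d: for (1) because
   the power means of the constant multiset are sigma^(2k), for (2) because
   R = m sigma^2 s turns the defining congruence into the recurrence of the
   truncated exponential exp(-m d sigma^2 s) for E_p.  These values single out
   p = (-sigma^2)^d d! L_d^(m-d)(x / sigma^2).  For (3), the Laguerre equation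
   x y'' + (m-d+1-x) y' + d y = 0 and its derivatives show that a double root
   of L_d^(m-d), necessarily nonzero, would be a root of every derivative,
   including the nonzero constant d-th one.  So L_d^(m-d) has d simple roots,
   and the monic degree-d polynomial p with the same zero set is its monic
   rescaling. *)

From mathcomp Require Import all_boot all_order all_algebra all_field.
From mathcomp Require Import ring.

Set Implicit Arguments.
Unset Strict Implicit.
Unset Printing Implicit Defensive.

Import Order.TTheory GRing.Theory Num.Theory.
Local Open Scope ring_scope.

Lemma natr_fact_neq0 (R : numDomainType) n : n`!%:R != 0 :> R.
Proof. by rewrite pnatr_eq0 -lt0n fact_gt0. Qed.

Lemma coef_comp_scaleX (R : comNzRingType) (p : {poly R}) (c : R) i :
  (p \Po (c *: 'X))`_i = c ^+ i * p`_i.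
Proof.
elim/poly_ind: p i => [|p a IHp] i; first by rewrite comp_poly0 !coef0 mulr0.
rewrite comp_poly_MXaddC !coefD !coefC -scalerAr coefZ !coefMX.
case: i => [|i] /=; first by rewrite mulr0 add0r expr0 mul1r.
by rewrite !addr0 IHp exprS mulrA.
Qed.

Lemma root_comp_scaleX (R : comNzRingType) (p : {poly R}) (c x : R) :
  root (p \Po (c *: 'X)) x = root p (c * x).
Proof. by rewrite /root horner_comp hornerZ hornerX. Qed.

Lemma separable_simple_roots (F : closedFieldType) (q : {poly F}) :
  (forall z, root q z -> ~~ root q^`() z) -> separable_poly q.
Proof.
move=> simple; rewrite unlock coprimep_def; apply: contraT => /closed_rootP[z].
move=> /[dup] /(root_dvdp (dvdp_gcdl _ _)) qz /(root_dvdp (dvdp_gcdr _ _)).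
by rewrite (negPf (simple z qz)).
Qed.

Lemma monic_eq_separable (F : closedFieldType) (p q : {poly F}) :
  p \is monic -> q \is monic -> (size p <= size q)%N -> separable_poly q ->
  (forall x, root q x -> root p x) -> p = q.
Proof.
move=> mon_p mon_q le_pq sep_q qp.
have [r Dq] := closed_field_poly_normal q.
rewrite (monicP mon_q) scale1r in Dq.
have q_dvd_p : q %| p.
  rewrite Dq uniq_roots_dvdp ?uniq_rootsE -?separable_prod_XsubC -?Dq //.
  by apply/allP => z z_r; rewrite qp // Dq root_prod_XsubC.
apply/eqP; rewrite -eqp_monic // eqp_sym -dvdp_size_eqp // eqn_leq.
by rewrite le_pq dvdp_leq // monic_neq0.
Qed.

Lemma exp_recurrence (F : numFieldType) (e : nat -> F) (c : F) (n : nat) :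
  (forall j, (j < n)%N -> e j.+1 *+ j.+1 = c * e j) <->
  (forall k, (k <= n)%N -> e k = c ^+ k / k`!%:R * e 0).
Proof.
have Sn_neq0 j : j.+1%:R != 0 :> F by rewrite pnatr_eq0.
split=> [rec|sol j lt_jn].
  elim=> [|k IHk] lt_kn; first by rewrite expr0 fact0 divr1 mul1r.
  apply: (mulIf (Sn_neq0 k)); rewrite mulr_natr rec // IHk 1?ltnW //.
  by rewrite factS natrM exprS; field; rewrite natr_fact_neq0 nat1r Sn_neq0.
rewrite (sol j.+1) // (sol j) 1?ltnW // factS natrM exprS -mulr_natr.
by field; rewrite natr_fact_neq0 nat1r Sn_neq0.
Qed.

Section Moments.
Variables (C : numClosedFieldType) (m d : nat).
Implicit Types (p q : {poly C}) (s : C).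

Let T_weight_neq0 k :
  (k`! * (m - k)`! * (d - k)`!)%:R / (m`! * d`!)%:R != 0 :> C.
Proof.
by rewrite mulf_neq0 ?invr_eq0 // pnatr_eq0 -lt0n !muln_gt0 !fact_gt0.
Qed.

Definition T_moment p k : C :=
  (k`! * (m - k)`! * (d - k)`!)%:R / (m`! * d`!)%:R * pcoef d p k.

Lemma T_moment0 p : T_moment p 0 = p`_d.
Proof.
rewrite /T_moment /pcoef !subn0 fact0 mul1n mulfV ?expr0 ?mul1r //.
by rewrite natrM mulf_neq0 ?natr_fact_neq0.
Qed.

Lemma T_moment_inj p q : (size p <= d.+1)%N -> (size q <= d.+1)%N ->
  (forall k, (k <= d)%N -> T_moment p k = T_moment q k) -> p = q.
Proof.
move=> szp szq eq_pq; apply/polyP => i; have [le_id|lt_di] := leqP i d.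
  move: (eq_pq _ (leq_subr i d)); rewrite /T_moment /pcoef.
  move=> /(mulfI (T_weight_neq0 _)) /(mulfI (negbT (signr_eq0 _ _))).
  by rewrite subKn.
by rewrite !nth_default // (leq_trans _ lt_di).
Qed.

Lemma is_T_transform_nseq p s : T_moment p 0 = 1 ->
  is_T_transform m d p (nseq d s) <->
  (forall k, (k <= d)%N -> T_moment p k = s ^+ k).
Proof.
move=> mom0; rewrite /is_T_transform size_nseq.
have mean_nseq k : (0 < d)%N -> d%:R^-1 * \sum_(x <- nseq d s) x ^+ k = s ^+ k.
  move=> d_gt0; rewrite big_nseq iter_addr_0 mulrnAr -mulrnAl -mulr_natr.
  by rewrite mulVf ?mul1r // pnatr_eq0 -lt0n.
split=> [[_ momT] [|k] le_kd|momT]; first by rewrite mom0.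
  by rewrite /T_moment -momT ?mean_nseq // (leq_trans _ le_kd).
split=> // k /andP[k_gt0 le_kd].
by rewrite -/(T_moment p k) momT // mean_nseq // (leq_trans k_gt0).
Qed.

Lemma coef_Epoly p k : (Epoly m d p)`_k =
  if (k <= d)%N then (- (m * d)%:R) ^+ k / k`!%:R * T_moment p k else 0.
Proof.
rewrite /Epoly -(poly_def _ (fun i => (-1) ^+ i * ((m * d) ^ i)%:R
  * ((m - i)`! * (d - i)`!)%:R / (m`! * d`!)%:R * pcoef d p i)) coef_poly ltnS.
case: leqP => // _; rewrite /T_moment natrX !natrM [in RHS]exprNn.
by field; rewrite !natr_fact_neq0.
Qed.

Lemma is_finite_R_scaleX p a : (0 < d)%N ->
  is_finite_R m d p (a *: 'X) <->
  (forall j, (j < d)%N ->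
     (Epoly m d p)`_j.+1 *+ j.+1 = - (d%:R * a) * (Epoly m d p)`_j).
Proof.
move=> d_gt0; have d_neq0 : d%:R != 0 :> C by rewrite pnatr_eq0 -lt0n.
have coefS j :
    (a *: 'X * Epoly m d p + d%:R^-1 *: ('X * (Epoly m d p)^`()))`_j.+1
    = a * (Epoly m d p)`_j + d%:R^-1 * ((Epoly m d p)`_j.+1 *+ j.+1).
  by rewrite coefD -scalerAl !coefZ !coefXM /= coef_deriv.
have size_aX : (size (a *: 'X) <= d.+1)%N.
  by rewrite (leq_trans (size_scale_leq _ _)) // size_polyX.
rewrite /is_finite_R; split=> [[_ R0] j lt_jd|rec]; last split=> // -[|j] le_jd.
- move/eqP: (R0 _ lt_jd); rewrite coefS addrC addr_eq0 => /eqP E.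
  by rewrite -(mulVKf d_neq0 (_ *+ _)) E mulrN mulrA mulNr.
- by rewrite coefD -scalerAl !coefZ !coefXM !mulr0 addr0.
- by rewrite coefS rec // mulNr mulrN -!mulrA mulKf // addrN.
Qed.

Lemma is_finite_R_const_T p s : (0 < d)%N -> (0 < m)%N -> T_moment p 0 = 1 ->
  is_finite_R m d p (m%:R * s *: 'X) <->
  (forall k, (k <= d)%N -> T_moment p k = s ^+ k).
Proof.
move=> d_gt0 m_gt0 mom0; rewrite is_finite_R_scaleX // exp_recurrence.
have E_weight_neq0 k : (- (m * d)%:R) ^+ k / k`!%:R != 0 :> C.
  rewrite mulf_neq0 ?invr_eq0 ?natr_fact_neq0 // expf_neq0 //.
  by rewrite oppr_eq0 pnatr_eq0 -lt0n muln_gt0 m_gt0.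
have -> : - (d%:R * (m%:R * s)) = - (m * d)%:R * s by rewrite natrM; ring.
have coefE k : (k <= d)%N ->
    (Epoly m d p)`_k = (- (m * d)%:R * s) ^+ k / k`!%:R * (Epoly m d p)`_0 <->
    T_moment p k = s ^+ k.
  move=> le_kd; rewrite !coef_Epoly le_kd mom0 expr0 fact0 divr1 !mulr1.
  rewrite exprMn [_ * s ^+ k / _]mulrAC.
  by split=> [/(mulfI (E_weight_neq0 k))|->].
by split=> E k le_kd; apply/(coefE _ le_kd)/E.
Qed.

End Moments.

Section LaguerreODE.
Variable C : numClosedFieldType.
Implicit Types (c e : C) (y : {poly C}).

Definition laguerre_op c e y : {poly C} :=
  'X * y^`()^`() + (c%:P - 'X) * y^`() + e *: y.

Lemma deriv_laguerre_op c e y :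
  (laguerre_op c e y)^`() = laguerre_op (c + 1) (e - 1) y^`().
Proof. by rewrite /laguerre_op !derivE -!mul_polyC polyCD polyC1; ring. Qed.

Lemma coef_laguerre_op c e y j : (laguerre_op c e y)`_j =
  j.+1%:R * (j%:R + c) * y`_j.+1 + (e - j%:R) * y`_j.
Proof.
rewrite /laguerre_op mulrBl !coefD coefN coefZ coefCM !coefXM !coef_deriv.
by case: j => [|j] /=; ring.
Qed.

Variables d a : nat.
Local Notation L := (laguerre C d a).

Lemma laguerreE :
  L = \poly_(i < d.+1) ('C(d + a, d - i)%:R * (-1) ^+ i / i`!%:R).
Proof. by rewrite poly_def. Qed.

Lemma coef_laguerre i : L`_i =
  if (i <= d)%N then 'C(d + a, d - i)%:R * (-1) ^+ i / i`!%:R else 0.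
Proof. by rewrite laguerreE coef_poly. Qed.

Lemma size_laguerre : size L = d.+1.
Proof.
rewrite laguerreE size_poly_eq // subnn bin0 mul1r.
by rewrite mulf_neq0 ?invr_eq0 ?signr_eq0 ?natr_fact_neq0.
Qed.

Lemma laguerre_op_laguerre : laguerre_op a.+1%:R d%:R L = 0.
Proof.
apply/polyP => j; rewrite coef_laguerre_op coef0 !coef_laguerre.
have [lt_jd|le_dj] := ltnP j d; last first.
  rewrite mulr0 add0r; have [->|ne_dj] := eqVneq d j.
    by rewrite subrr mul0r.
  by rewrite leqNgt ltn_neqAle ne_dj le_dj mulr0.
rewrite ltnW //.
set n := (d - j.+1)%N; have Dn : (d - j = n.+1)%N by rewrite /n subnSK.
have Nn : (d + a - n = j.+1 + a)%N by rewrite subnBA // -addnA addKn addnC.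
have binS : 'C(d + a, n.+1)%:R = (j.+1 + a)%:R * 'C(d + a, n)%:R / n.+1%:R :> C.
  by rewrite -Nn -natrM -mul_bin_left natrM [RHS]mulrC mulKf // pnatr_eq0.
rewrite -(natrB _ (ltnW lt_jd)) Dn binS factS natrM exprS.
by field; rewrite natr_fact_neq0 !nat1r !pnatr_eq0.
Qed.

Lemma laguerre_op_derivn k :
  laguerre_op (a + k).+1%:R (d%:R - k%:R) L^`(k) = 0.
Proof.
elim: k => [|k IHk]; first by rewrite addn0 subr0 laguerre_op_laguerre.
have := congr1 deriv IHk; rewrite deriv_laguerre_op deriv0 -derivnS.
by rewrite natr1 addnS -[k.+1%:R]natr1 opprD addrA.
Qed.

Lemma derivn_laguerre : L^`(d) = ((-1) ^+ d)%:P.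
Proof.
apply/polyP => i; rewrite coef_derivn coefC coef_laguerre.
case: i => [|i]; last by rewrite addnS ltnNge leq_addr mul0rn.
rewrite addn0 leqnn subnn bin0 ffactnn mul1r -(mulr_natr ((-1) ^+ d / _)).
by rewrite divfK // natr_fact_neq0.
Qed.

Lemma laguerre_derivn_root z :
  root L z -> root L^`() z -> forall k, root L^`(k) z.
Proof.
move=> Lz L'z; have z_neq0 : z != 0.
  apply: contraTneq Lz => ->; rewrite /root horner_coef0 coef_laguerre subn0.
  by rewrite expr0 fact0 divr1 mulr1 pnatr_eq0 -lt0n bin_gt0 leq_addr.
(* At z != 0 the k-th derived equation forces L^(k+2) to vanish as well. *)
suff Lk k : root L^`(k) z && root L^`(k.+1) z by move=> k; case/andP: (Lk k).
elim: k => [|k /andP[Lk Lk1]]; first by rewrite derivn1 Lz L'z.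
rewrite Lk1 /=; move: (congr1 (horner^~ z) (laguerre_op_derivn k)).
rewrite /laguerre_op !hornerE -!derivnS (eqP Lk) (eqP Lk1) !mulr0 !addr0.
by move/eqP; rewrite mulf_eq0 (negPf z_neq0).
Qed.

Lemma laguerre_simple_root z : root L z -> ~~ root L^`() z.
Proof.
move=> Lz; apply/negP => /(laguerre_derivn_root Lz)/(_ d).
by rewrite derivn_laguerre rootC signr_eq0.
Qed.

End LaguerreODE.

Section ScaledLaguerre.
Variables (C : numClosedFieldType) (d a : nat) (s : C).
Hypothesis s_neq0 : s != 0.

(* The factor (-s)^d d! cancels the leading coefficient (-1)^d / (d! s^d). *)
Definition laguerre_scaled : {poly C} :=
  ((- s) ^+ d * d`!%:R) *: (laguerre C d a \Po (s^-1 *: 'X)).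

Let scale_neq0 : (- s) ^+ d * d`!%:R != 0.
Proof. by rewrite mulf_neq0 ?expf_neq0 ?oppr_eq0 ?natr_fact_neq0. Qed.

Lemma root_laguerre_scaled x :
  root laguerre_scaled x = root (laguerre C d a) (x / s).
Proof. by rewrite rootZ // root_comp_scaleX mulrC. Qed.

Lemma separable_laguerre_scaled : separable_poly laguerre_scaled.
Proof.
apply: separable_simple_roots => z; rewrite root_laguerre_scaled => Lz.
rewrite derivZ deriv_comp derivZ derivX rootZ // rootM root_comp_scaleX.
rewrite alg_polyC rootC invr_eq0 (negPf s_neq0) orbF mulrC.
exact: laguerre_simple_root.
Qed.

Lemma size_laguerre_scaled : size laguerre_scaled = d.+1.
Proof.
rewrite size_scale // size_comp_poly2 ?size_laguerre //.
by rewrite size_scale ?invr_eq0 // size_polyX.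
Qed.

Lemma laguerre_scaled_monic : laguerre_scaled \is monic.
Proof.
rewrite monicE /lead_coef size_laguerre_scaled /= coefZ coef_comp_scaleX.
rewrite coef_laguerre leqnn subnn bin0 [(- s) ^+ d]exprNn exprVn -signr_odd.
(* [field] treats (-1) ^+ n as an atom, hence the split on the parity of n. *)
by apply/eqP; case: (odd d) => /=; field; rewrite expf_neq0 // natr_fact_neq0.
Qed.

End ScaledLaguerre.

Lemma T_moment_laguerre_scaled (C : numClosedFieldType) (m d : nat) (s : C) :
  s != 0 -> (d <= m)%N ->
  forall k, (k <= d)%N -> T_moment m d (laguerre_scaled d (m - d) s) k = s ^+ k.
Proof.
move=> s_neq0 le_dm k le_kd; have le_km := leq_trans le_kd le_dm.
rewrite /T_moment /pcoef coefZ coef_comp_scaleX coef_laguerre leq_subr.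
rewrite subKn // subnKC //.
have kmk_neq0 : k`!%:R * (m - k)`!%:R != 0 :> C.
  by apply: mulf_neq0; apply: natr_fact_neq0.
have binE : 'C(m, k)%:R = m`!%:R / (k`!%:R * (m - k)`!%:R) :> C.
  by rewrite -(bin_fact le_km) !natrM (mulfK kmk_neq0).
have signE : (-1) ^+ d = (-1) ^+ (d - k) * (-1) ^+ k :> C.
  by rewrite -exprD (subnK le_kd).
have powE : s ^+ d = s ^+ (d - k) * s ^+ k by rewrite -exprD (subnK le_kd).
rewrite binE [(- s) ^+ d]exprNn signE powE exprVn !natrM.
rewrite -[(-1) ^+ k]signr_odd -[(-1) ^+ (d - k)]signr_odd.
have s_dk_neq0 : s ^+ (d - k) != 0 by rewrite expf_neq0.
by case: (odd k); case: (odd (d - k)) => /=; field;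
  rewrite s_dk_neq0 !natr_fact_neq0.
Qed.

Theorem mainTheorem9 (C : numClosedFieldType) (m d : nat) (p : {poly C})
    (sigma2 : C) :
  (1 <= d)%N -> (d <= m)%N ->
  (exists rs : seq C, size rs = d /\ all (fun r => 0 <= r) rs /\
     p = \prod_(r <- rs) ('X - r%:P)) ->
  0 < sigma2 ->
  [<-> is_T_transform m d p (nseq d sigma2);
       is_finite_R m d p (m%:R * sigma2 *: 'X);
       forall x : C, root p x = root (laguerre C d (m - d)) (x / sigma2)].
Proof.
move=> d_gt0 le_dm [rs [size_rs [_ Dp]]] sigma2_gt0.
have s_neq0 : sigma2 != 0 by rewrite gt_eqF.
have size_p : size p = d.+1 by rewrite Dp size_prod_XsubC size_rs.
have monic_p : p \is monic by rewrite Dp monic_prod_XsubC.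
have mom0 : T_moment m d p 0 = 1.
  by rewrite T_moment0 -(monicP monic_p) /lead_coef size_p.
set q := laguerre_scaled d (m - d) sigma2.
have moments_q :
    (forall k, (k <= d)%N -> T_moment m d p k = sigma2 ^+ k) <-> p = q.
  have mom_q := T_moment_laguerre_scaled s_neq0 le_dm.
  split=> [mom_p|->] //; apply: (T_moment_inj (m := m) (d := d)) => [||k le_kd].
  - by rewrite size_p.
  - by rewrite size_laguerre_scaled.
  by rewrite mom_p // mom_q.
have roots_q :
    (forall x, root p x = root (laguerre C d (m - d)) (x / sigma2)) <-> p = q.
  split=> [roots_p|-> x]; last exact: root_laguerre_scaled.
  apply: monic_eq_separable => [||||x].
  - exact: monic_p.
  - exact: laguerre_scaled_monic.
  - by rewrite size_p size_laguerre_scaled.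
  - exact: separable_laguerre_scaled.
  by rewrite roots_p root_laguerre_scaled.
have T_iff := is_T_transform_nseq sigma2 mom0.
have R_iff := is_finite_R_const_T sigma2 d_gt0 (leq_trans d_gt0 le_dm) mom0.
by tfae=> [/T_iff/R_iff | /R_iff/moments_q/roots_q | /roots_q/moments_q/T_iff].
Qed.
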